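(* Let $I,J$ be finite sets, $\omega:\mathbb{R}^I\to\mathbb{R}^I$ a nonsingular linear map, $\Lambda:\mathbb{R}^J\to\mathbb{R}^I$ a linear injection, $\iota:\mathbb{R}^J\to\mathbb{R}^J$ a linear bijection and $\vartheta:\mathbb{R}^J\to\mathbb{R}^J$ a symmetric positive definite linear map. On $\mathbb{R}^J\oplus\mathbb{R}^I\oplus\mathbb{R}^I$ define $$A=\begin{pmatrix}-\tfrac12\iota\iota^* & -\Lambda^* & 0\\ \Lambda & 0 & -\omega^*\\ 0 & \omega & 0\end{pmatrix},\qquad B=\begin{pmatrix}\iota\\0\\0\end{pmatrix}\vartheta^{1/2}.$$ If the pair $(\omega^*\omega,\Lambda)$ satisfies the Kalman condition, then the pair $(A,B)$ satisfies the Kalman condition.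
   Context: A pair $(M,N)$ of linear maps $M:\mathbb{R}^m\to\mathbb{R}^m$, $N:\mathbb{R}^k\to\mathbb{R}^m$ satisfies the Kalman condition if the ranges of $N, MN, M^2N, \dots$ together span $\mathbb{R}^m$. Stars denote transposes (adjoints for the standard inner products). *)

From HB Require Import structures.
From mathcomp Require Import all_boot all_order all_algebra.
Set Implicit Arguments. Unset Strict Implicit. Unset Printing Implicit Defensive.
Import Order.TTheory GRing.Theory Num.Theory.
Local Open Scope ring_scope.

(* Linear maps are matrices acting on column vectors: x |-> M *m x.
   Adjoints (stars) are transposes. *)

(* Kalman condition: the ranges (column spaces) of N, MN, M^2N, ... together
   span R^m; i.e. every vector x lies in the span of the column spaces of
   M^i N for i < d, for some d.  Column space of X = row space of X^T. *)
Definition kalman (R : fieldType) (m k : nat) (M : 'M[R]_m) (N : 'M[R]_(m, k)) : Prop :=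
  forall x : 'cV[R]_m, exists d : nat,
    (x^T <= \sum_(i < d) <<(M ^+ i *m N)^T>>)%MS.

Definition sym_posdef (R : realFieldType) (n : nat) (S : 'M[R]_n) : Prop :=
  S^T = S /\ forall v : 'cV[R]_n, v != 0 -> 0 < (v^T *m S *m v) 0 0.

Definition Ablock (R : realFieldType) (nI nJ : nat)
  (om : 'M[R]_nI) (La : 'M[R]_(nI, nJ)) (io : 'M[R]_nJ) : 'M[R]_(nJ + (nI + nI)) :=
  block_mx (- (2%:R^-1) *: (io *m io^T)) (row_mx (- La^T) 0)
           (col_mx La 0) (block_mx 0 (- om^T) om 0).

(* B = (iota; 0; 0) * theta^{1/2}, with sqrtT the square root of theta *)
Definition Bblock (R : realFieldType) (nI nJ : nat)
  (io : 'M[R]_nJ) (sqrtT : 'M[R]_nJ) : 'M[R]_(nJ + (nI + nI), nJ) :=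
  col_mx io (0 : 'M[R]_(nI + nI, nJ)) *m sqrtT.

(* The Kalman condition for (A, B) says that the reachable space, i.e. the
   smallest A-invariant subspace containing the range of B, is everything.
   Since iota and theta^{1/2} are invertible, the range of B is the whole first
   summand R^J.  Applying A to (u, 0, 0), (0, y, 0) and (0, 0, z) and cancelling
   the parts already known to be reachable shows that (0, Lambda u, 0) is
   reachable, and that reachability of (0, y, 0) gives that of (0, 0, omega y),
   which in turn gives that of (0, omega^* omega y, 0).  So the y with
   (0, y, 0) reachable form an omega^* omega-invariant subspace containing the
   range of Lambda, which is all of R^I by the Kalman condition for
   (omega^* omega, Lambda); since omega is onto, every (0, 0, z) follows. *)

From HB Require Import structures.
From mathcomp Require Import all_boot all_order all_algebra.
Import Order.TTheory GRing.Theory Num.Theory.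
Local Open Scope ring_scope.

Set Implicit Arguments.
Unset Strict Implicit.
Unset Printing Implicit Defensive.

Section Reachable.
Variables (F : fieldType) (n k : nat) (A : 'M[F]_n) (B : 'M[F]_(n, k)).

Definition krylov_space (d : nat) := (\sum_(i < d) <<(A ^+ i *m B)^T>>)%MS.

Definition reachable (v : 'cV[F]_n) := exists d, (v^T <= krylov_space d)%MS.

Lemma krylov_space_mono d e : (d <= e)%N -> (krylov_space d <= krylov_space e)%MS.
Proof.
move=> le_de; apply/sumsmx_subP => i _.
exact: (sumsmx_sup (widen_ord le_de i)).
Qed.

Lemma reachable0 : reachable 0.
Proof. by exists 0%N; rewrite trmx0 sub0mx. Qed.

Lemma reachableD u v : reachable u -> reachable v -> reachable (u + v).
Proof.
move=> [d1 u_d1] [d2 v_d2]; exists (maxn d1 d2); rewrite linearD /=.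
apply: addmx_sub.
  exact: submx_trans u_d1 (krylov_space_mono (leq_maxl _ _)).
exact: submx_trans v_d2 (krylov_space_mono (leq_maxr _ _)).
Qed.

Lemma reachableZ c v : reachable v -> reachable (c *: v).
Proof. by move=> [d v_d]; exists d; rewrite linearZ /=; apply: scalemx_sub. Qed.

Lemma reachableN v : reachable v -> reachable (- v).
Proof. by rewrite -scaleN1r; apply: reachableZ. Qed.

Lemma reachableB u v : reachable u -> reachable v -> reachable (u - v).
Proof. by move=> ru rv; apply/reachableD/reachableN. Qed.

Lemma reachable_mul v : reachable v -> reachable (A *m v).
Proof.
move=> [d /sub_sumsmxP [c def_v]]; exists d.+1.
rewrite trmx_mul def_v mulmx_suml; apply: summx_sub => i _.
rewrite -mulmxA; apply: submx_trans (submxMl _ _) _.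
rewrite (eqmxMr _ (genmxE _)) -trmx_mul mulmxA -[A *m A ^+ i]/(A * A ^+ i).
by rewrite -exprS (sumsmx_sup (lift ord0 i)) ?genmxE.
Qed.

Lemma reachable_range w : reachable (B *m w).
Proof.
exists 1%N; rewrite trmx_mul; apply: submx_trans (submxMl _ _) _.
by rewrite (sumsmx_sup ord0) ?genmxE ?expr0 ?mul1mx.
Qed.

Lemma kalman_invariant_ind (P : 'cV[F]_n -> Prop) :
    kalman A B -> P 0 -> (forall u v, P u -> P v -> P (u + v)) ->
    (forall w, P (B *m w)) -> (forall v, P v -> P (A *m v)) ->
  forall x, P x.
Proof.
move=> kalmanAB P0 PD PB PA x.
have P_krylov i w : P (A ^+ i *m B *m w).
  elim: i w => [|i IHi] w; first by rewrite expr0 mul1mx.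
  by rewrite exprS -mulmxE -!mulmxA; apply: PA; rewrite mulmxA.
have [d /sub_sumsmxP [c def_x]] := kalmanAB x.
rewrite -(trmxK x) def_x raddf_sum /=; apply: (big_ind P) => // i _.
have c_sub : (c i *m <<(A ^+ i *m B)^T>> <= (A ^+ i *m B)^T)%MS.
  by apply: submx_trans (submxMl _ _) _; rewrite genmxE.
by rewrite -(mulmxKpV c_sub) trmx_mul trmxK.
Qed.

End Reachable.

Lemma posdef_unitmx (R : realFieldType) n (S : 'M[R]_n) :
  sym_posdef S -> S \in unitmx.
Proof.
move=> [_ S_pos]; rewrite unitmxE unitfE; apply/negP => /det0P [v v_neq0 vS0].
have := S_pos v^T; rewrite trmxK vS0 mul0mx mxE ltxx.
by rewrite -trmx0 (inj_eq trmx_inj) => /(_ v_neq0).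
Qed.

Section BlockSystem.
Variables (R : realFieldType) (nI nJ : nat).
Variables (om : 'M[R]_nI) (La : 'M[R]_(nI, nJ)) (io sqrtT : 'M[R]_nJ).

Lemma Ablock_mulJ (u : 'cV[R]_nJ) :
  Ablock om La io *m col_mx u 0
    = col_mx (- 2%:R^-1 *: (io *m io^T) *m u) (col_mx (La *m u) 0).
Proof.
by rewrite /Ablock mul_block_col mul_col_mx ?mulmx0 ?mul0mx ?addr0 ?col_mx0.
Qed.

Lemma Ablock_mulI1 (y : 'cV[R]_nI) :
  Ablock om La io *m col_mx 0 (col_mx y 0)
    = col_mx (- La^T *m y) (col_mx 0 (om *m y)).
Proof.
rewrite /Ablock mul_block_col mul_row_col mul_block_col.
by rewrite ?mulmx0 ?mul0mx ?addr0 ?add0r ?col_mx0.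
Qed.

Lemma Ablock_mulI2 (z : 'cV[R]_nI) :
  Ablock om La io *m col_mx 0 (col_mx 0 z)
    = col_mx 0 (col_mx (- om^T *m z) 0).
Proof.
rewrite /Ablock mul_block_col mul_row_col mul_block_col.
by rewrite ?mulmx0 ?mul0mx ?addr0 ?add0r ?col_mx0.
Qed.

Hypotheses (omU : om \in unitmx) (ioU : io \in unitmx) (sqrtTU : sqrtT \in unitmx).

Local Notation reach := (reachable (Ablock om La io) (Bblock nI io sqrtT)).

Lemma reachableJ (u : 'cV[R]_nJ) : reach (col_mx u 0).
Proof.
have ioTU : io *m sqrtT \in unitmx by rewrite unitmx_mul ioU sqrtTU.
suff -> : col_mx u 0 = Bblock nI io sqrtT *m (invmx (io *m sqrtT) *m u).
  exact: reachable_range.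
by rewrite /Bblock mul_col_mx mul0mx mul_col_mx mul0mx mulKVmx.
Qed.

Lemma reachableI1_range (u : 'cV[R]_nJ) : reach (col_mx 0 (col_mx (La *m u) 0)).
Proof.
have := reachableB (reachable_mul (reachableJ u))
                   (reachableJ (- 2%:R^-1 *: (io *m io^T) *m u)).
by rewrite Ablock_mulJ opp_col_mx add_col_mx subrr oppr0 addr0.
Qed.

Lemma reachableI1_I2 (y : 'cV[R]_nI) :
  reach (col_mx 0 (col_mx y 0)) -> reach (col_mx 0 (col_mx 0 (om *m y))).
Proof.
move=> reach_y; have := reachableB (reachable_mul reach_y) (reachableJ (- La^T *m y)).
by rewrite Ablock_mulI1 opp_col_mx add_col_mx subrr oppr0 addr0.
Qed.

Lemma reachableI2_I1 (z : 'cV[R]_nI) :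
  reach (col_mx 0 (col_mx 0 z)) -> reach (col_mx 0 (col_mx (om^T *m z) 0)).
Proof.
move=> reach_z; have := reachableN (reachable_mul reach_z).
by rewrite Ablock_mulI2 !opp_col_mx !oppr0 mulNmx opprK.
Qed.

Lemma reachableI1 : kalman (om^T *m om) La -> forall y, reach (col_mx 0 (col_mx y 0)).
Proof.
move=> kalman_omLa; apply: (kalman_invariant_ind kalman_omLa).
- by rewrite !col_mx0; apply: reachable0.
- by move=> u v ru rv; have := reachableD ru rv; rewrite !add_col_mx !addr0.
- exact: reachableI1_range.
by move=> y /reachableI1_I2 /reachableI2_I1; rewrite mulmxA.
Qed.

Lemma reachableI2 : kalman (om^T *m om) La -> forall z, reach (col_mx 0 (col_mx 0 z)).
Proof.
by move=> kalman_omLa z; rewrite -(mulKVmx omU z); apply/reachableI1_I2/reachableI1.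
Qed.

Lemma kalman_block : kalman (om^T *m om) La -> kalman (Ablock om La io) (Bblock nI io sqrtT).
Proof.
move=> kalman_omLa x; change (reach x).
rewrite -(vsubmxK x) -(vsubmxK (dsubmx x)).
set u := usubmx x; set y := usubmx (dsubmx x); set z := dsubmx (dsubmx x).
have -> : col_mx u (col_mx y z)
    = col_mx u 0 + col_mx 0 (col_mx y 0) + col_mx 0 (col_mx 0 z).
  by rewrite !(add_col_mx, addr0, add0r).
apply: reachableD; first apply: reachableD.
- exact: reachableJ.
- exact: reachableI1.
exact: reachableI2.
Qed.

End BlockSystem.

Theorem mainTheorem10 (R : realFieldType) (nI nJ : nat)
  (om : 'M[R]_nI) (La : 'M[R]_(nI, nJ)) (io th sqrtT : 'M[R]_nJ) :
  om \in unitmx ->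
  (forall x : 'cV[R]_nJ, La *m x = 0 -> x = 0) ->
  io \in unitmx ->
  sym_posdef th ->
  sym_posdef sqrtT -> sqrtT *m sqrtT = th ->
  kalman (om^T *m om) La ->
  kalman (Ablock om La io) (Bblock nI io sqrtT).
Proof.
move=> omU _ ioU _ sqrtT_posdef _.
exact: kalman_block omU ioU (posdef_unitmx sqrtT_posdef).
Qed.
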